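(* Let $d\ge 2$ and $n\ge 2$ be integers and let the $n_c=d^n$ clients be identified with the set $\{0,1,\dots,d-1\}^n$ (grouped by the $d^n$-hypermesh). For each coordinate $k\in\{1,\dots,n\}$ and each client $a$, the group of $a$ in direction $k$ is the set of $d$ clients that agree with $a$ in every coordinate except possibly the $k$-th; thus every client belongs to exactly $n$ groups. Let $M$ be the set of malicious clients, let $\mathcal V$ be the set of groups containing at least one malicious client (the flagged groups), and let the set $I$ of clients identified as malicious consist of those clients all $n$ of whose groups lie in $\mathcal V$. Then (i) every malicious client is identified, i.e. $M\subseteq I$ (true positive rate $100\%$); and (ii) no benign client is identified, i.e. $I\setminus M=\emptyset$ (false positive rate $0\%$), provided that $|M|\le n$, where the case $|M|=n$ is allowed only when at least two malicious clients lie in the same group.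
   Context: This models the detection stage of a secret-sharing-based privacy-preserving quantized federated learning protocol: the server can only examine per-group aggregates, marks a group as suspicious (places it in $\mathcal V$) exactly when it contains a malicious client, and declares a client malicious when all $n$ groups it belongs to are in $\mathcal V$. Two clients are neighbors if their identifiers differ in exactly one coordinate; each group (an edge of the hypermesh) consists of $d$ mutually neighboring clients. *)

From mathcomp Require Import all_boot.
Set Implicit Arguments. Unset Strict Implicit. Unset Printing Implicit Defensive.

Definition client (d n : nat) := {ffun 'I_n -> 'I_d}.

Definition group (d n : nat) (a : client d n) (k : 'I_n) : {set client d n} :=
  [set b : client d n | [forall j : 'I_n, (j != k) ==> (b j == a j)]].

Definition groups (d n : nat) : {set {set client d n}} :=
  [set group a k | a : client d n, k : 'I_n].

Definition flagged (d n : nat) (M : {set client d n}) : {set {set client d n}} :=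
  [set G in groups d n | G :&: M != set0].

Definition identified (d n : nat) (M : {set client d n}) : {set client d n} :=
  [set a : client d n | [forall k : 'I_n, group a k \in flagged M]].

(* A malicious client lies in each of its own groups, so all of them are
   flagged.  Conversely, if a benign client x is identified, each of its n
   groups contains a malicious client w k, which differs from x exactly in
   coordinate k.  These n witnesses are pairwise distinct, so |M| >= n; and two
   of them differ in two coordinates, so no two share a group.  Hence, if
   |M| = n, the witnesses exhaust M and no group contains two malicious
   clients. *)
From mathcomp Require Import all_boot.

Section Groups.
Context {d n : nat}.
Implicit Types (a b : client d n) (M : {set client d n}).

Lemma group_id a k : a \in group a k.
Proof. by rewrite inE; apply/forallP => j; apply/implyP. Qed.

Lemma group_eq {a b k j} : b \in group a k -> j != k -> b j = a j.
Proof. by rewrite inE => /forallP/(_ j)/implyP agree /agree/eqP. Qed.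

Lemma group_neq {a b k} : b \in group a k -> b != a -> b k != a k.
Proof.
move=> bG; apply: contra => /eqP eq_k; apply/eqP/ffunP => j.
by case: (eqVneq j k) => [->|jk]; [|exact: group_eq bG jk].
Qed.

Lemma flagged_group M a k :
  (group a k \in flagged M) = [exists b in group a k, b \in M].
Proof.
rewrite inE imset2_f ?inE //=.
by apply/set0Pn/existsP => -[b bGM]; exists b; rewrite in_setI in bGM *.
Qed.

Lemma sub_identified M : M \subset identified M.
Proof.
apply/subsetP => a aM; rewrite inE; apply/forallP => k.
by rewrite flagged_group; apply/existsP; exists a; rewrite group_id.
Qed.

Lemma identified_witnesses {M a} :
  a \in identified M -> a \notin M ->
  exists w : 'I_n -> client d n,
    [/\ forall k, w k \in M, forall k, w k \in group a k & forall k, w k != a].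
Proof.
rewrite inE => /forallP aI aM.
have w_ex k : exists b, [&& b \in M, b \in group a k & b != a].
  have /existsP[b /andP[bG bM]] : [exists b in group a k, b \in M].
    by rewrite -flagged_group.
  by exists b; rewrite bM bG; apply: contraNneq aM => <-.
exists (fun k => xchoose (w_ex k)).
by split=> k; case/and3P: (xchooseP (w_ex k)).
Qed.

Section Witnesses.
Context {a : client d n} {w : 'I_n -> client d n}.
Hypotheses (w_group : forall k, w k \in group a k) (w_neq : forall k, w k != a).

Lemma witness_diag k : w k k != a k.
Proof. exact: group_neq. Qed.

Lemma witness_off i j : j != i -> w i j = a j.
Proof. exact: group_eq. Qed.

Lemma witness_inj : injective w.
Proof.
move=> i j wij; apply/eqP; apply: contraT => ij.
by move: (witness_diag j); rewrite -wij witness_off ?eqxx // eq_sym.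
Qed.

Lemma witness_not_grouped i j k : i != j -> w j \notin group (w i) k.
Proof.
move=> ij; apply/negP => wG.
have [ik | ik] := eqVneq i k.
  have jk : j != k by rewrite -ik eq_sym.
  by move: (witness_diag j); rewrite (group_eq wG jk) witness_off ?eqxx // eq_sym.
by move: (witness_diag i); rewrite -(group_eq wG ik) witness_off ?eqxx // eq_sym.
Qed.

Lemma card_witnesses : #|[set w k | k : 'I_n]| = n.
Proof. by rewrite card_imset ?card_ord //; exact: witness_inj. Qed.

End Witnesses.

Lemma identified_benign_card {M a} : a \in identified M :\: M -> n <= #|M|.
Proof.
move=> /setDP[aI aM]; have [w [wM wG wa]] := identified_witnesses aI aM.
rewrite -{1}(card_witnesses wG wa).
by apply: subset_leq_card; apply/subsetP => _ /imsetP[k _ ->].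
Qed.

Lemma identified_benign_scattered {M a b c} k :
  a \in identified M :\: M -> #|M| = n ->
  b \in M -> c \in M -> b != c -> c \notin group b k.
Proof.
move=> /setDP[aI aM] cardM; have [w [wM wG wa]] := identified_witnesses aI aM.
have wT : [set w i | i : 'I_n] = M.
  apply/eqP; rewrite eqEcard (card_witnesses wG wa) cardM leqnn andbT.
  by apply/subsetP => _ /imsetP[k' _ ->].
rewrite -wT => /imsetP[i _ ->] /imsetP[j _ ->] wij.
by apply: (witness_not_grouped wG wa); apply: contraNneq wij => ->.
Qed.

End Groups.

Theorem theorem1 (d n : nat) (M : {set client d n}) :
  2 <= d -> 2 <= n ->
  (M \subset identified M) /\
  ((#|M| < n \/
    (#|M| = n /\
     exists a b : client d n, exists k : 'I_n,
       [/\ a \in M, b \in M, a != b & b \in group a k])) ->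
   identified M :\: M = set0).
Proof.
(* The argument needs no lower bound on d or n. *)
move=> _ _; split; first exact: sub_identified.
move=> hyp; apply/eqP/set0Pn => -[x xI].
case: hyp => [|[cardM [a [b [k [aM bM ab bG]]]]]].
  by rewrite ltnNge (identified_benign_card xI).
by move: bG; apply/negP; exact: identified_benign_scattered xI cardM aM bM ab.
Qed.
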